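(* Fix $\alpha\in(0,1/2)$ and $q_1,q_3\in(0,1)$. Define $m^*(3/4,3/4)=16\alpha$, $m^*(3/4,1/4)=m^*(1/4,3/4)=\frac{8(1-2\alpha)}{3}$, $m^*(1/4,1/4)=\frac{16\alpha}{9}$, $m^*=\frac{16(4\alpha+3)}{9}$, $\overline{q}^*=\frac{8\alpha+3}{8\alpha+6}$, $\overline{\lambda}^*=1/m^*$, $$\overline{q}=\frac{1}{m^*}\Big[\big(m^*(\tfrac34,\tfrac34)+m^*(\tfrac34,\tfrac14)\big)q_3+\big(m^*(\tfrac14,\tfrac34)+m^*(\tfrac14,\tfrac14)\big)q_1\Big],$$ $$\overline{\lambda}=\frac{1}{m^*}\Big(m^*(\tfrac34,\tfrac34)\tfrac{1-q_3}{4}+m^*(\tfrac34,\tfrac14)\tfrac{3(1-q_3)}{4}+m^*(\tfrac14,\tfrac34)\tfrac{1-q_1}{4}+m^*(\tfrac14,\tfrac14)\tfrac{3(1-q_1)}{4}\Big).$$ If $\frac{(4\alpha-3)q_1+8\alpha+3}{12\alpha+3}<q_3<\frac{5-2q_1}{6}$ and either $q_1<1/4<\alpha$ or $\alpha<1/4<q_1$ holds, then $\overline{q}>\overline{q}^*$ and $\overline{\lambda}>\overline{\lambda}^*$.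
   Context: Interpretation: $m^*(x,e)$ is the steady-state mass of users of type $(x,e)$ under the status quo algorithm with recommendation quality $q^*(x)=x$ and per-period churn probability $(1-q(x))(1-e)$; $\overline{q},\overline{\lambda}$ are the ARQ and churn rate observed in a one-period A/B experiment where the treatment (quality $q_1$ for segment $x=1/4$, $q_3$ for $x=3/4$) is applied to the status quo steady-state population; $\overline{q}^*,\overline{\lambda}^*$ are the status quo's values. *)

From Stdlib Require Import Reals Lra.
Open Scope R_scope.

(* Steady-state masses under the status quo, indexed by (x, e). *)
Definition m33 (a : R) : R := 16 * a.
Definition m31 (a : R) : R := 8 * (1 - 2 * a) / 3.
Definition m13 (a : R) : R := 8 * (1 - 2 * a) / 3.
Definition m11 (a : R) : R := 16 * a / 9.
Definition mstar (a : R) : R := 16 * (4 * a + 3) / 9.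

Definition qbar_star (a : R) : R := (8 * a + 3) / (8 * a + 6).
Definition lbar_star (a : R) : R := 1 / mstar a.

Definition qbar (a q1 q3 : R) : R :=
  / mstar a * ((m33 a + m31 a) * q3 + (m13 a + m11 a) * q1).

Definition lbar (a q1 q3 : R) : R :=
  / mstar a * (m33 a * ((1 - q3) / 4) + m31 a * (3 * (1 - q3) / 4)
              + m13 a * ((1 - q1) / 4) + m11 a * (3 * (1 - q1) / 4)).

(** Both experimental averages are affine in (q1, q3), and their gaps to the
    status quo factor as a positive weight times the distance of q3 from one of
    the two thresholds: the ARQ gap is a multiple of q3 minus the lower bound,
    the churn gap a multiple of the upper bound minus q3. *)

From Stdlib Require Import Reals Lra.
Open Scope R_scope.

Lemma qbar_sub_qbar_star (a q1 q3 : R) :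
  12 * a + 3 <> 0 -> 4 * a + 3 <> 0 ->
  qbar a q1 q3 - qbar_star a =
  (12 * a + 3) / (2 * (4 * a + 3))
  * (q3 - ((4 * a - 3) * q1 + 8 * a + 3) / (12 * a + 3)).
Proof.
  intros h12 h4.
  unfold qbar, qbar_star, mstar, m33, m31, m13, m11.
  field; lra.
Qed.

Lemma lbar_sub_lbar_star (a q1 q3 : R) :
  4 * a + 3 <> 0 ->
  lbar a q1 q3 - lbar_star a = 2 * lbar_star a * ((5 - 2 * q1) / 6 - q3).
Proof.
  intros h4.
  unfold lbar, lbar_star, mstar, m33, m31, m13, m11.
  field; lra.
Qed.

Lemma lbar_star_pos (a : R) : - (3 / 4) < a -> 0 < lbar_star a.
Proof.
  intros ha.
  unfold lbar_star, mstar.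
  apply Rdiv_lt_0_compat; lra.
Qed.

Lemma qbar_gt_qbar_star (a q1 q3 : R) :
  - (1 / 4) < a ->
  ((4 * a - 3) * q1 + 8 * a + 3) / (12 * a + 3) < q3 ->
  qbar a q1 q3 > qbar_star a.
Proof.
  intros ha hlo.
  apply Rlt_0_minus.
  rewrite qbar_sub_qbar_star by lra.
  apply Rmult_lt_0_compat.
  - apply Rdiv_lt_0_compat; lra.
  - now apply Rlt_0_minus.
Qed.

Lemma lbar_gt_lbar_star (a q1 q3 : R) :
  - (3 / 4) < a -> q3 < (5 - 2 * q1) / 6 -> lbar a q1 q3 > lbar_star a.
Proof.
  intros ha hhi.
  apply Rlt_0_minus.
  rewrite lbar_sub_lbar_star by lra.
  apply Rmult_lt_0_compat.
  - apply Rmult_lt_0_compat; [lra | now apply lbar_star_pos].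
  - now apply Rlt_0_minus.
Qed.

Theorem lemma1 (a q1 q3 : R)
  (ha : 0 < a < 1 / 2) (hq1 : 0 < q1 < 1) (hq3 : 0 < q3 < 1)
  (hlo : ((4 * a - 3) * q1 + 8 * a + 3) / (12 * a + 3) < q3)
  (hhi : q3 < (5 - 2 * q1) / 6)
  (hcase : (q1 < 1 / 4 /\ 1 / 4 < a) \/ (a < 1 / 4 /\ 1 / 4 < q1)) :
  qbar a q1 q3 > qbar_star a /\ lbar a q1 q3 > lbar_star a.
Proof.
  split.
  - apply qbar_gt_qbar_star; [lra | exact hlo].
  - apply lbar_gt_lbar_star; [lra | exact hhi].
Qed.
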